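(* Let $\mathcal T$ be a ternary algebra over $\mathbb C$, i.e. a complex vector space equipped with a trilinear ternary multiplication $(a,b,c)\mapsto a\cdot b\cdot c$ which is associative of the first kind or associative of the second kind (see context). Let $\omega$ be a primitive cube root of unity and $\overline\omega$ its complex conjugate. For $a,b,c\in\mathcal T$ define the ternary commutator $$[a,b,c]=a\cdot b\cdot c+\omega\,b\cdot c\cdot a+\overline\omega\,c\cdot a\cdot b+c\cdot b\cdot a+\overline\omega\,b\cdot a\cdot c+\omega\,a\cdot c\cdot b$$ and its conjugate $$[a,b,c]^\ast=a\cdot b\cdot c+\overline\omega\,b\cdot c\cdot a+\omega\,c\cdot a\cdot b+c\cdot b\cdot a+\omega\,b\cdot a\cdot c+\overline\omega\,a\cdot c\cdot b.$$ Then for all $a,b,c,d,f\in\mathcal T$: $$[a,b,c]=\omega\,[b,c,a]=\overline\omega\,[c,a,b],\qquad [a,b,c]^\ast=\overline\omega\,[b,c,a]^\ast=\omega\,[c,a,b]^\ast,$$ and the ternary commutator satisfies the identity $$\sum_{(x_1,x_2,x_3,x_4,x_5)}\Big(\big[[x_1,x_2,x_3],x_4,x_5\big]+\big[[x_1,x_4,x_2],x_5,x_3\big]+\big[[x_1,x_5,x_4],x_3,x_2\big]+\big[[x_1,x_3,x_5],x_2,x_4\big]\Big)=0,$$ where the sum runs over the five cyclic permutations $(x_1,x_2,x_3,x_4,x_5)\in\{(a,b,c,d,f),(b,c,d,f,a),(c,d,f,a,b),(d,f,a,b,c),(f,a,b,c,d)\}$.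
   Context: A ternary multiplication on a complex vector space $\mathcal T$ is a trilinear map $\mathcal T\times\mathcal T\times\mathcal T\to\mathcal T$, $(a,b,c)\mapsto a\cdot b\cdot c$. It is associative of the first kind if $(a\cdot b\cdot c)\cdot d\cdot f=a\cdot(b\cdot c\cdot d)\cdot f=a\cdot b\cdot(c\cdot d\cdot f)$ for all $a,b,c,d,f\in\mathcal T$, and associative of the second kind if $(a\cdot b\cdot c)\cdot d\cdot f=a\cdot(d\cdot c\cdot b)\cdot f=a\cdot b\cdot(c\cdot d\cdot f)$ for all $a,b,c,d,f\in\mathcal T$. A ternary algebra is a complex vector space with a ternary multiplication associative of the first or of the second kind. *)

From HB Require Import structures.
From mathcomp Require Import all_boot all_order all_algebra.
From mathcomp Require Import reals.
From mathcomp Require Import complex.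
Set Implicit Arguments. Unset Strict Implicit. Unset Printing Implicit Defensive.
Import Order.TTheory GRing.Theory Num.Theory.
Local Open Scope ring_scope.

(* The complex numbers are modelled as R[i] for an arbitrary realType R
   (every realType is a complete archimedean ordered field, i.e. is R). *)

Section Ternary.
Variables (R : realType) (T : lmodType R[i]).

Definition trilinear (m : T -> T -> T -> T) : Prop :=
  [/\ forall (k : R[i]) a a' b c, m (k *: a + a') b c = k *: m a b c + m a' b c,
      forall (k : R[i]) a b b' c, m a (k *: b + b') c = k *: m a b c + m a b' c &
      forall (k : R[i]) a b c c', m a b (k *: c + c') = k *: m a b c + m a b c'].

Definition assoc_first_kind (m : T -> T -> T -> T) : Prop :=
  forall a b c d f,
    m (m a b c) d f = m a (m b c d) f /\ m a (m b c d) f = m a b (m c d f).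

Definition assoc_second_kind (m : T -> T -> T -> T) : Prop :=
  forall a b c d f,
    m (m a b c) d f = m a (m d c b) f /\ m a (m d c b) f = m a b (m c d f).

Definition ternary_algebra (m : T -> T -> T -> T) : Prop :=
  trilinear m /\ (assoc_first_kind m \/ assoc_second_kind m).

Definition tcomm (m : T -> T -> T -> T) (w : R[i]) (a b c : T) : T :=
  m a b c + w *: m b c a + (conjc w) *: m c a b
  + m c b a + (conjc w) *: m b a c + w *: m a c b.

Definition tcomm_conj (m : T -> T -> T -> T) (w : R[i]) (a b c : T) : T :=
  m a b c + (conjc w) *: m b c a + w *: m c a b
  + m c b a + w *: m b a c + (conjc w) *: m a c b.

Definition tcomm_block (m : T -> T -> T -> T) (w : R[i]) (x1 x2 x3 x4 x5 : T) : T :=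
  let br := tcomm m w in
  br (br x1 x2 x3) x4 x5 + br (br x1 x4 x2) x5 x3
  + br (br x1 x5 x4) x3 x2 + br (br x1 x3 x5) x2 x4.

End Ternary.

(** The rotation rules only use w^3 = 1 and conj w = w^2.  For the cyclic
    identity, associativity of either kind rewrites every ternary product of
    five elements as a left-normed product ((x y z) u v); in the second kind
    the middle factor comes out reversed, which is harmless because the
    commutator is invariant under reversing all of its words.  Hence every
    double commutator [[x0,x1,x2],x3,x4] is one fixed formal combination of
    36 words weighted by powers of w.  The 20 arrangements of the identity
    are the affine maps i |-> a + k i of Z/5, and after relabelling each of
    the 720 resulting words occurs equally often with each exponent of w
    modulo 3, so everything cancels since 1 + w + w^2 = 0. *)

From mathcomp Require Import all_boot all_order all_algebra.
From mathcomp Require Import reals.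
From mathcomp Require Import complex.
Set Implicit Arguments. Unset Strict Implicit. Unset Printing Implicit Defensive.
Import Order.TTheory GRing.Theory Num.Theory.

(* A formal sum is a list of pairs (e, s) standing for w^e times the product
   of the letters listed in s. *)
Definition relabel (s : seq nat) (l : seq (nat * seq nat)) : seq (nat * seq nat) :=
  [seq (t.1, map (nth 0 s) t.2) | t <- l].

Definition triplicate (ws : seq (seq nat)) : seq (nat * seq nat) :=
  flatten [seq [:: (0, u); (1, u); (2, u)] | u <- ws].

(* Each word occurs equally often with each exponent modulo 3; the words
   carrying exponent 0 serve as the certificate. *)
Definition balanced (l : seq (nat * seq nat)) : bool :=
  perm_eq [seq (t.1 %% 3, t.2) | t <- l]
          (triplicate [seq t.2 | t <- l & t.1 %% 3 == 0]).

(* [a,b,c] over the letters 0, 1, 2, using conj w = w^2. *)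
Definition tcomm_word : seq (nat * seq nat) :=
  [:: (0, [:: 0; 1; 2]); (1, [:: 1; 2; 0]); (2, [:: 2; 0; 1]);
      (0, [:: 2; 1; 0]); (2, [:: 1; 0; 2]); (1, [:: 0; 2; 1])].

(* [[x0,x1,x2],x3,x4]: letter 0 of the outer commutator is replaced by the
   inner word, and its letters 1, 2 become 3, 4. *)
Definition tcomm2_word : seq (nat * seq nat) :=
  [seq (t.1 + u.1, flatten [seq if i == 0 then u.2 else [:: i.+2] | i <- t.2])
  | t <- tcomm_word, u <- tcomm_word].

(* The arrangements x_i |-> x_(a + k i) of Z/5, with k = 1, 3, 4, 2 in the
   order of the four terms of tcomm_block. *)
Definition affine_words : seq (seq nat) :=
  [seq [seq (a + k * i) %% 5 | i <- iota 0 5] | a <- iota 0 5, k <- [:: 1; 3; 4; 2]].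

Lemma affine_tcomm2_balanced :
  balanced (flatten [seq relabel s tcomm2_word | s <- affine_words]).
Proof. by vm_compute. Qed.

Local Open Scope ring_scope.

Section CubeRoot.
Variables (K : idomainType) (w : K).
Hypothesis w_prim : 3.-primitive_root w.

Lemma prim3_root_sum : 1 + w + w ^+ 2 = 0.
Proof.
have w_neq1 : w != 1 by rewrite -[w]expr1 -(prim_order_dvd w_prim).
have := subrX1 w 3; rewrite prim_expr_order // subrr !big_ord_recl big_ord0.
move/esym/eqP; rewrite mulf_eq0 subr_eq0 (negbTE w_neq1) /= addr0 addrA.
by move/eqP.
Qed.

End CubeRoot.

Section ComplexCubeRoot.
Variables (R : rcfType) (w : R[i]).
Hypothesis w_prim : 3.-primitive_root w.

Lemma prim3_conjc : conjc w = w ^+ 2.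
Proof.
have norm_w : `|w| = 1.
  by apply/eqP; rewrite -(@pexpr_eq1 _ _ 3) // -normrX prim_expr_order // normr1.
have w_conjw : w * conjc w = 1 by rewrite -sqr_normc norm_w expr1n.
by rewrite -[conjc w]mul1r -(prim_expr_order w_prim) exprSr -mulrA w_conjw mulr1.
Qed.

Lemma prim3_root_conjc : 3.-primitive_root (conjc w).
Proof. by rewrite prim3_conjc prim_root_exp_coprime. Qed.

End ComplexCubeRoot.

Section WordSum.
Variables (K : idomainType) (V : lmodType K) (w : K).

Definition word_sum (Q : seq nat -> V) (l : seq (nat * seq nat)) : V :=
  \sum_(t <- l) w ^+ t.1 *: Q t.2.

Lemma word_sum_relabel (P : seq V -> V) (g : nat -> V) s l :
  word_sum (P \o map g) (relabel s l) = word_sum (P \o map (g \o nth 0%N s)) l.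
Proof. by rewrite /word_sum big_map; apply: eq_bigr => t _; rewrite /= map_comp. Qed.

Lemma word_sum_flatten Q (h : seq nat -> seq (nat * seq nat)) ss :
  word_sum Q (flatten [seq h s | s <- ss]) = \sum_(s <- ss) word_sum Q (h s).
Proof. by rewrite /word_sum big_flatten big_map. Qed.

Hypothesis w_prim : 3.-primitive_root w.

Lemma word_sum_triplicate Q ws : word_sum Q (triplicate ws) = 0.
Proof.
rewrite word_sum_flatten big1 // => u _.
rewrite /word_sum !big_cons big_nil /= expr0 expr1 addr0 addrA -!scalerDl.
by rewrite prim3_root_sum // scale0r.
Qed.

Lemma word_sum_balanced Q l : balanced l -> word_sum Q l = 0.
Proof.
move=> l_bal; rewrite -(word_sum_triplicate Q [seq t.2 | t <- l & t.1 %% 3 == 0]%N).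
rewrite /word_sum -(perm_big _ l_bal) big_map.
by apply: eq_bigr => t _; rewrite prim_expr_mod.
Qed.

End WordSum.

Section Commutator.
Variables (R : realType) (T : lmodType R[i]).
Implicit Types (n : T -> T -> T -> T) (w : R[i]) (a b c : T).

Lemma tcomm_conjE n w a b c : tcomm_conj n w a b c = tcomm n (conjc w) a b c.
Proof. by rewrite /tcomm_conj /tcomm conjcK. Qed.

Lemma tcomm_rev n w a b c : tcomm (fun x y z => n z y x) w a b c = tcomm n w a b c.
Proof. by rewrite /tcomm [LHS](ACl (4*6*5*1*3*2)%AC). Qed.

Lemma eq_tcomm n n' w a b c :
  (forall x y z, n x y z = n' x y z) -> tcomm n w a b c = tcomm n' w a b c.
Proof. by move=> eq_n; rewrite /tcomm !eq_n. Qed.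

Lemma linear_tcomm (L : T -> T) n w a b c :
  linear L -> L (tcomm n w a b c) = tcomm (fun x y z => L (n x y z)) w a b c.
Proof. by case/GRing.semilinear_linear => LZ LD; rewrite /tcomm !LD !LZ. Qed.

Variable w : R[i].
Hypothesis w_prim : 3.-primitive_root w.

Lemma tcomm_rotate n a b c : tcomm n w a b c = w *: tcomm n w b c a.
Proof.
rewrite /tcomm prim3_conjc // !scalerDr !scalerA -expr2 -exprS.
by rewrite (prim_expr_order w_prim) !scale1r [RHS](ACl (3*1*2*5*6*4)%AC).
Qed.

Lemma tcomm_rotate2 n a b c : tcomm n w a b c = conjc w *: tcomm n w c a b.
Proof. by rewrite tcomm_rotate (tcomm_rotate _ b) scalerA -expr2 prim3_conjc. Qed.

End Commutator.

Section TernaryAlgebra.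
Variables (R : realType) (T : lmodType R[i]) (m : T -> T -> T -> T).
Hypothesis m_alg : ternary_algebra m.

Lemma tmul_assoc3 a b c d f : m a b (m c d f) = m (m a b c) d f.
Proof. by case: m_alg => _ [] /(_ a b c d f) [-> ->]. Qed.

Lemma mul_tcomm1 w a b c d f :
  m (tcomm m w a b c) d f = tcomm (fun x y z => m (m x y z) d f) w a b c.
Proof.
case: m_alg => [[m_lin1 _ _] _].
by apply: (@linear_tcomm _ _ (fun u => m u d f)) => k u v; apply: m_lin1.
Qed.

Lemma mul_tcomm2 w a b c d f :
  m a (tcomm m w b c d) f = tcomm (fun x y z => m (m a x y) z f) w b c d.
Proof.
case: m_alg => [[_ m_lin2 _] m_assoc].
rewrite (@linear_tcomm _ _ (fun u => m a u f)) => [|k u v]; last exact: m_lin2.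
case: m_assoc => m_assoc.
  by apply: eq_tcomm => x y z; case: (m_assoc a x y z f) => -> _.
by rewrite -[RHS]tcomm_rev; apply: eq_tcomm => x y z; case: (m_assoc a z y x f) => -> _.
Qed.

Lemma mul_tcomm3 w a b c d f :
  m a b (tcomm m w c d f) = tcomm (fun x y z => m (m a b x) y z) w c d f.
Proof.
case: m_alg => [[_ _ m_lin3] _].
rewrite (@linear_tcomm _ _ (m a b)) => [|k u v]; last exact: m_lin3.
by apply: eq_tcomm => x y z; rewrite tmul_assoc3.
Qed.

Definition lprod5 (xs : seq T) : T := m (m xs`_0 xs`_1 xs`_2) xs`_3 xs`_4.

Definition tcomm2 (w : R[i]) (g : nat -> T) : T :=
  tcomm m w (tcomm m w (g 0%N) (g 1%N) (g 2%N)) (g 3%N) (g 4%N).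

Lemma tcomm2_expand w g : 3.-primitive_root w ->
  tcomm2 w g = word_sum w (lprod5 \o map g) tcomm2_word.
Proof.
move=> w_prim; rewrite /tcomm2 {1}/tcomm !(mul_tcomm1, mul_tcomm2, mul_tcomm3).
rewrite /tcomm prim3_conjc // !scalerDr !scalerA -expr2 -!exprS -!exprSr -!exprD.
rewrite /word_sum /tcomm2_word /= !big_cons big_nil /lprod5 /= expr0 !expr1 !scale1r.
by rewrite !addr0 !addrA.
Qed.

Lemma tcomm_blocks_affine w a b c d f :
  tcomm_block m w a b c d f + tcomm_block m w b c d f a
  + tcomm_block m w c d f a b + tcomm_block m w d f a b c
  + tcomm_block m w f a b c d
  = \sum_(s <- affine_words) tcomm2 w (nth 0 [:: a; b; c; d; f] \o nth 0%N s).
Proof.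
rewrite /affine_words big_allpairs_dep /= !big_cons !big_nil.
by rewrite /tcomm_block /tcomm2 /= !addr0 !addrA.
Qed.

Lemma tcomm_blocks_cyclic_sum w a b c d f : 3.-primitive_root w ->
  tcomm_block m w a b c d f + tcomm_block m w b c d f a
  + tcomm_block m w c d f a b + tcomm_block m w d f a b c
  + tcomm_block m w f a b c d = 0.
Proof.
move=> w_prim; set g := nth 0 [:: a; b; c; d; f].
have expand s : tcomm2 w (g \o nth 0%N s)
    = word_sum w (lprod5 \o map g) (relabel s tcomm2_word).
  by rewrite tcomm2_expand // word_sum_relabel.
rewrite tcomm_blocks_affine (eq_bigr _ (fun s _ => expand s)) -word_sum_flatten.
by rewrite (word_sum_balanced w_prim _ affine_tcomm2_balanced).
Qed.

End TernaryAlgebra.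

Theorem theorem1 (R : realType) (T : lmodType R[i]) (m : T -> T -> T -> T)
  (w : R[i]) :
  ternary_algebra m -> 3.-primitive_root w ->
  forall a b c d f : T,
    [/\ tcomm m w a b c = w *: tcomm m w b c a,
        tcomm m w a b c = conjc w *: tcomm m w c a b,
        tcomm_conj m w a b c = conjc w *: tcomm_conj m w b c a,
        tcomm_conj m w a b c = w *: tcomm_conj m w c a b &
        tcomm_block m w a b c d f + tcomm_block m w b c d f a
        + tcomm_block m w c d f a b + tcomm_block m w d f a b c
        + tcomm_block m w f a b c d = 0].
Proof.
move=> m_alg w_prim a b c d f; have wc_prim := prim3_root_conjc w_prim.
split; rewrite ?tcomm_conjE.
- exact: tcomm_rotate.
- exact: tcomm_rotate2.
- exact: tcomm_rotate.
- by rewrite tcomm_rotate2 // conjcK.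
- exact: tcomm_blocks_cyclic_sum.
Qed.
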